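(* Let $I$ be an instance of 2-SCSS-$(k,1)$ given by a directed graph $G=(V,E)$ with edge weights $\omega:E\to\mathbb{R}^{\geq 0}$ and terminals $s,t$, and let $I'$ be the Token Game constructed from $I$ as described in the context. Then $\mathrm{OPT}(I)\geq \mathrm{OPT}(I')$.
   Context: 2-SCSS-$(k,1)$: find $k$ paths $F_1,\dots,F_k$ from $s$ to $t$ and one path $B$ from $t$ to $s$ minimizing $\sum_{e\in E}\omega(e)\max\{|\{i: e\in F_i\}|,\ [e\in B]\}$; $\mathrm{OPT}(I)$ is this minimum. The Token Game $I'$: tokens $\mathbf{b},\mathbf{f}_1,\dots,\mathbf{f}_k$; states are vectors $\bar v=(v_0,v_1,\dots,v_k)\in V^{k+1}$ ($v_0$ the location of $\mathbf{b}$, $v_i$ that of $\mathbf{f}_i$); start state $(s,\dots,s)$, end state $(t,\dots,t)$. From each state $\bar v$ the moves are: (Backward) for each edge $(w,v_0)\in E$, move to the state obtained by replacing $v_0$ by $w$, at cost $\omega(w,v_0)$; (Forward) for each $i\in[k]$ and each edge $(v_i,x)\in E$, move to the state obtained by replacing $v_i$ by $x$, at cost $\omega(v_i,x)$; (Flip) for each $i\in[k]$, move to the state obtained by swapping $v_0$ and $v_i$ (new coordinate $0$ is $v_i$, new coordinate $i$ is $v_0$, others unchanged), at cost equal to the weight of a shortest $v_i\leadsto v_0$ path in $G$. $\mathrm{OPT}(I')$ is the minimum total cost of a sequence of moves from the start state to the end state. *)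

From mathcomp Require Import all_boot all_order all_algebra.
Set Implicit Arguments. Unset Strict Implicit. Unset Printing Implicit Defensive.
Import Order.TTheory GRing.Theory Num.Theory.
Local Open Scope ring_scope.

Section Defs.
Variables (R : realFieldType) (V : finType).
Variables (E : {set V * V}) (w : V -> V -> R).

(* A path from u to v is given by the list p of vertices after u:
   the vertex sequence is u :: p, consecutive pairs are edges of E,
   it ends in v, and vertices are pairwise distinct (simple path). *)
Definition is_path (u v : V) (p : seq V) : bool :=
  [&& path (fun a b => (a, b) \in E) u p, last u p == v & uniq (u :: p)].

Definition path_edges (u : V) (p : seq V) : seq (V * V) := zip (u :: p) p.

Definition path_weight (u : V) (p : seq V) : R :=
  \sum_(e <- path_edges u p) w e.1 e.2.

Definition shortest_dist (u v : V) (d : R) : Prop :=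
  (exists2 p, is_path u v p & path_weight u p = d) /\
  (forall q, is_path u v q -> d <= path_weight u q).

Definition scss_cost (k : nat) (s t : V) (F : 'I_k -> seq V) (B : seq V) : R :=
  \sum_(e in E)
     w e.1 e.2 * Num.max (#|[set i | e \in path_edges s (F i)]|)%:R
                         (e \in path_edges t B)%:R.

Definition scss_feasible_cost (k : nat) (s t : V) (c : R) : Prop :=
  exists (F : 'I_k -> seq V) (B : seq V),
    [/\ forall i, is_path s t (F i), is_path t s B & c = scss_cost s t F B].

(* A state (v_0, v_1, ..., v_k): coordinate 0 is the token b,
   coordinate lift ord0 i (= i+1) is the token f_{i+1}. *)
Definition tstate (k : nat) := {ffun 'I_k.+1 -> V}.

Definition tset (k : nat) (x : tstate k) (j : 'I_k.+1) (a : V) : tstate k :=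
  [ffun l => if l == j then a else x l].

Definition tswap (k : nat) (x : tstate k) (j : 'I_k.+1) : tstate k :=
  [ffun l => if l == ord0 then x j else if l == j then x ord0 else x l].

Inductive tmove (k : nat) : tstate k -> tstate k -> R -> Prop :=
  | tm_backward (x : tstate k) (a : V) :
      (a, x ord0) \in E -> tmove x (tset x ord0 a) (w a (x ord0))
  | tm_forward (x : tstate k) (i : 'I_k) (a : V) :
      (x (lift ord0 i), a) \in E ->
      tmove x (tset x (lift ord0 i) a) (w (x (lift ord0 i)) a)
  | tm_flip (x : tstate k) (i : 'I_k) (d : R) :
      shortest_dist (x (lift ord0 i)) (x ord0) d ->
      tmove x (tswap x (lift ord0 i)) d.

Inductive tplay (k : nat) : tstate k -> tstate k -> R -> Prop :=
  | tp_nil (x : tstate k) : tplay x x 0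
  | tp_cons (x y z : tstate k) (c1 c2 : R) : tmove x y c1 -> tplay y z c2 -> tplay x z (c1 + c2).

Definition token_feasible_cost (k : nat) (s t : V) (c : R) : Prop :=
  tplay [ffun _ : 'I_k.+1 => s] [ffun _ : 'I_k.+1 => t] c.

End Defs.

From mathcomp Require Import all_boot all_order all_algebra zify.
Set Implicit Arguments. Unset Strict Implicit. Unset Printing Implicit Defensive.
Import Order.TTheory GRing.Theory Num.Theory.

(* Alongside the current state we keep simple paths F_i from each token f_i to
   t and B from t to the token b, and an edge budget H bounding
   max(#{i | e in F_i}, [e in B]); initially the budget costs exactly OPT(I).
   Every move is paid for by a nonempty multiset of edges removed from the
   budget, so the budget size decreases and the play ends at (t, ..., t).
   If some f_j's next edge is used more by the F_i than by B, move f_j along it;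
   if b's last edge on B lies on no F_i, move b back along it.  Otherwise b lies
   on some F_j whose token f_j lies on B: flip b and f_j, paying with the
   segment of F_j from f_j to b, unless that segment shares an edge with the
   part of B before f_j; then B can be rerouted through the shared edge so as to
   avoid the next edge of f_j, and f_j moves forward. *)

Section Paths.
Variables (V : finType) (E : {set V * V}).
Local Notation edge := (fun a b : V => (a, b) \in E).
Implicit Types (x y a b : V) (p q : seq V).

Lemma path_edges_cons x y p : path_edges x (y :: p) = (x, y) :: path_edges y p.
Proof. by []. Qed.

Lemma path_edges_cat x p q :
  path_edges x (p ++ q) = path_edges x p ++ path_edges (last x p) q.
Proof. by elim: p x => //= y p IH x; rewrite path_edges_cons IH. Qed.

Lemma path_edgesE (r : rel V) x p :
  path r x p = all [pred e | r e.1 e.2] (path_edges x p).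
Proof. by elim: p x => //= y p IH x; rewrite IH. Qed.

Lemma path_edges_subset x p : path edge x p -> {subset path_edges x p <= E}.
Proof. by rewrite path_edgesE => /allP Ep [a b] /Ep. Qed.

Lemma mem_path_edges x p a b :
  (a, b) \in path_edges x p -> a \in x :: p /\ b \in p.
Proof.
elim: p x => //= y p IH x; rewrite path_edges_cons in_cons.
case/orP=> [/eqP[-> ->]|/IH[ax bp]]; first by rewrite !mem_head.
by split; rewrite in_cons ?ax ?bp orbT.
Qed.

Lemma last_notin_path_edges x p b :
  uniq (x :: p) -> (last x p, b) \notin path_edges x p.
Proof.
elim: p x => //= y p IH x /andP[xNyp Uyp].
rewrite path_edges_cons in_cons negb_or IH // andbT.
by apply: contraNneq xNyp => -[<- _]; apply: mem_last.
Qed.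

Lemma uniq_path_edges x p : uniq (x :: p) -> uniq (path_edges x p).
Proof. exact: zip_uniql. Qed.

Lemma is_path_cat x y p q : is_path E x y (p ++ q) ->
  is_path E x (last x p) p /\ is_path E (last x p) y q.
Proof.
rewrite /is_path cat_path last_cat -cat_cons cat_uniq.
case/and3P=> /andP[Ep Eq] -> /and3P[Up Dpq Uq]; rewrite Ep Eq Up eqxx /= Uq andbT.
split=> //; move: Dpq; apply: contraNN => lq.
by apply/hasP; exists (last x p); rewrite ?mem_last.
Qed.

Lemma split_at_vertex x p y : y \in x :: p ->
  exists p1 p2, p = p1 ++ p2 /\ last x p1 = y.
Proof.
rewrite in_cons => /predU1P[->|]; first by exists [::], p.
by case/splitPr=> p1 p2; exists (rcons p1 y), p2; rewrite cat_rcons last_rcons.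
Qed.

Lemma shortcut x p : path edge x p ->
  exists2 q, is_path E x (last x p) q & {subset path_edges x q <= path_edges x p}.
Proof.
move=> Ep; have: path (fun a b => (a, b) \in path_edges x p) x p.
  by rewrite path_edgesE; apply/allP => -[].
case/shortenP=> q; rewrite path_edgesE => /allP qp Uq _.
have qpE : {subset path_edges x q <= path_edges x p} by move=> [a b] /qp.
exists q => //; apply/and3P; split=> //; rewrite path_edgesE.
by apply/allP=> e /qpE; move: Ep; rewrite path_edgesE => /allP; apply.
Qed.

Lemma splice_paths x v y p q : is_path E x v p -> is_path E v y q ->
    has (mem (path_edges x p)) (path_edges v q) ->
  exists2 r, is_path E x y r & forall e, e \in path_edges x r ->
    (e.1 != v) && ((e \in path_edges x p) || (e \in path_edges v q)).
Proof.
move=> xvp vyq /hasP[[c d] cdq cdp].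
have [p1 [p2 [pE p1d]]] : exists p1 p2, p = p1 ++ p2 /\ last x p1 = d.
  by apply: split_at_vertex; rewrite in_cons (mem_path_edges cdp).2 orbT.
have [q1 [q2 [qE q1d]]] : exists q1 q2, q = q1 ++ q2 /\ last v q1 = d.
  by apply: split_at_vertex; rewrite in_cons (mem_path_edges cdq).2 orbT.
have /and3P[Ep /eqP pv Up] := xvp; have /and3P[Eq /eqP qy /= /andP[vNq _]] := vyq.
have Ewalk : path edge x (p1 ++ q2).
  move: Ep Eq; rewrite pE qE !cat_path p1d q1d => /andP[-> _] /andP[_ ->] //.
have [r xyr rwalk] := shortcut Ewalk.
rewrite last_cat p1d -q1d -last_cat -qE qy in xyr.
exists r => // e /rwalk; rewrite path_edges_cat p1d mem_cat => /orP[e_p1|e_q2].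
  have e_p : e \in path_edges x p by rewrite pE path_edges_cat mem_cat e_p1.
  rewrite e_p andbT; case: e e_p {e_p1} => a b /=; apply: contraTneq => ->.
  by rewrite -pv; apply: last_notin_path_edges.
have e_q : e \in path_edges v q by rewrite qE path_edges_cat mem_cat q1d e_q2 orbT.
rewrite e_q orbT andbT; case: e e_q2 {e_q} => a b /mem_path_edges[+ _] /=.
apply: contraTneq => ->; rewrite in_cons negb_or; apply/andP; split.
  by apply: contraNneq vNq => ->; apply: (mem_path_edges cdq).2.
by apply: contra vNq; rewrite qE mem_cat => ->; rewrite orbT.
Qed.

Lemma size_is_path x y p : is_path E x y p -> size p <= #|V|.
Proof. by case/and3P=> _ _ /= /andP[_ /card_uniqP <-]; apply: max_card. Qed.

Section Weights.
Local Open Scope ring_scope.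
Variables (R : realFieldType) (w : V -> V -> R).

Lemma exists_shortest_dist x y q : is_path E x y q ->
  exists2 d, shortest_dist E w x y d & d <= path_weight w x q.
Proof.
move=> xyq; pose s0 : #|V|.-bseq V := Bseq (size_is_path xyq).
have [s xys smin] := @arg_minP _ R _ s0 (fun s : #|V|.-bseq V => is_path E x y s)
  (fun s => path_weight w x s) xyq.
exists (path_weight w x s); last exact: (smin s0 xyq).
by split=> [|p xyp]; [exists s | apply: (smin (Bseq (size_is_path xyp)))].
Qed.

Lemma sum_seq_count (l : seq (V * V)) : {subset l <= E} ->
  \sum_(e <- l) w e.1 e.2 = \sum_(e in E) w e.1 e.2 * (count_mem e l)%:R.
Proof.
elim: l => [_|a l IH lE]; first by rewrite big_nil big1 // => e _; rewrite mulr0.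
have aE : a \in E by apply: lE; rewrite mem_head.
rewrite big_cons IH => [|e el]; last by apply: lE; rewrite in_cons el orbT.
rewrite (bigD1 a aE) [in RHS](bigD1 a aE) /= eqxx add1n -addn1 natrD mulrDr mulr1 addrA.
congr (_ + _); first by rewrite addrC.
by apply: eq_bigr => e /andP[_ /negbTE]; rewrite eq_sym => ->.
Qed.

End Weights.
End Paths.

Section TokenGame.
Variables (R : realFieldType) (V : finType) (E : {set V * V}) (w : V -> V -> R).
Hypothesis w_ge0 : forall u v, (u, v) \in E -> (0 <= w u v)%R.
Variables (k : nat) (t : V).
Local Notation state := (tstate V k).
Local Notation fpos st i := (st (lift ord0 i)).
Local Notation bpos st := (st ord0).
Local Notation final := [ffun _ : 'I_k.+1 => t].
Implicit Types (i j : 'I_k) (st : state) (F : 'I_k -> seq V) (x y u a : V)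
  (p q B : seq V) (e : V * V) (l : seq (V * V)) (H : V * V -> nat).

Lemma lift0_eq i j : (lift ord0 i == lift ord0 j) = (i == j).
Proof. exact: (inj_eq (@lift_inj _ ord0)). Qed.

Lemma lift0_neq0 i : (lift ord0 i == ord0) = false.
Proof. by apply/negbTE; rewrite eq_sym neq_lift. Qed.

Lemma fpos_tset_f st j a i :
  fpos (tset st (lift ord0 j) a) i = if i == j then a else fpos st i.
Proof. by rewrite ffunE lift0_eq. Qed.

Lemma bpos_tset_f st j a : bpos (tset st (lift ord0 j) a) = bpos st.
Proof. by rewrite ffunE eq_sym lift0_neq0. Qed.

Lemma fpos_tset_b st a i : fpos (tset st ord0 a) i = fpos st i.
Proof. by rewrite ffunE lift0_neq0. Qed.

Lemma bpos_tset_b st a : bpos (tset st ord0 a) = a.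
Proof. by rewrite ffunE eqxx. Qed.

Lemma fpos_tswap st j i :
  fpos (tswap st (lift ord0 j)) i = if i == j then bpos st else fpos st i.
Proof. by rewrite ffunE lift0_neq0 lift0_eq. Qed.

Lemma bpos_tswap st j : bpos (tswap st (lift ord0 j)) = fpos st j.
Proof. by rewrite ffunE eqxx. Qed.

Definition edge_count x p e : nat := count_mem e (path_edges x p).

Definition fcount st F e : nat := \sum_(i < k) edge_count (fpos st i) (F i) e.

Definition budget_cost H : R := (\sum_(e in E) w e.1 e.2 * (H e)%:R)%R.

Definition budget_size H : nat := \sum_(e in E) H e.

Definition consume H l e : nat := H e - count_mem e l.

Definition consumable H l :=
  [/\ l != [::], {subset l <= E} & forall e, count_mem e l <= H e].

Definition covers H st F B :=
  [/\ forall i, is_path E (fpos st i) t (F i), is_path E t (bpos st) B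
    & forall e, maxn (fcount st F e) (edge_count t B e) <= H e].

Definition coverable H st := exists F B, covers H st F B.

Definition budget_move H st := exists st' c l,
  [/\ tmove E w st st' c, (c <= \sum_(e <- l) w e.1 e.2)%R, consumable H l
    & coverable (consume H l) st'].

Lemma edge_count_cons x y p e :
  edge_count x (y :: p) e = ((x, y) == e) + edge_count y p e.
Proof. by []. Qed.

Lemma edge_count_cat x p q e :
  edge_count x (p ++ q) e = edge_count x p e + edge_count (last x p) q e.
Proof. by rewrite /edge_count path_edges_cat count_cat. Qed.

Lemma edge_count_uniq x p e :
  uniq (x :: p) -> edge_count x p e = (e \in path_edges x p).
Proof. by move=> Uxp; rewrite /edge_count count_uniq_mem ?uniq_path_edges. Qed.

Lemma edge_count_gt0 x p e : (0 < edge_count x p e) = (e \in path_edges x p).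
Proof. by rewrite -has_count has_pred1. Qed.

Lemma leq_edge_count_fcount st F j e :
  edge_count (fpos st j) (F j) e <= fcount st F e.
Proof. by rewrite /fcount (bigD1 j) ?leq_addr. Qed.

Lemma fcount_first_edge_gt0 st F j a p :
  F j = a :: p -> 0 < fcount st F (fpos st j, a).
Proof.
move=> Fj; apply: leq_trans (leq_edge_count_fcount st F j _).
by rewrite Fj edge_count_cons eqxx.
Qed.

Lemma fcount_replace st st' F F' j e :
    (forall i, i != j -> fpos st' i = fpos st i /\ F' i = F i) ->
  fcount st' F' e + edge_count (fpos st j) (F j) e =
  fcount st F e + edge_count (fpos st' j) (F' j) e.
Proof.
move=> same; rewrite /fcount (bigD1 j) // [in RHS](bigD1 j) //=.
rewrite (eq_bigr (fun i => edge_count (fpos st i) (F i) e)) => [|i /same[-> ->]//].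
lia.
Qed.

Lemma budget_cost_ge0 H : (0 <= budget_cost H)%R.
Proof. by apply: sumr_ge0 => -[a b] abE; rewrite mulr_ge0 ?w_ge0. Qed.

Lemma budget_cost_consume H l : {subset l <= E} ->
    (forall e, count_mem e l <= H e) ->
  (budget_cost (consume H l) + \sum_(e <- l) w e.1 e.2)%R = budget_cost H.
Proof.
move=> lE lH; rewrite (sum_seq_count w lE) /budget_cost -big_split.
by apply: eq_bigr => e _; rewrite /= -mulrDr -natrD subnK.
Qed.

Lemma budget_size_consume H l :
  consumable H l -> budget_size (consume H l) < budget_size H.
Proof.
case: l => [[]//|a l [_ lE lH]]; have aE : a \in E by apply: lE; rewrite mem_head.
rewrite /budget_size (bigD1 a aE) [X in (_ < X)](bigD1 a aE) /=.
rewrite -addSn leq_add ?leq_sum // => [|e _]; last exact: leq_subr.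
by have := lH a; rewrite /consume /= eqxx; lia.
Qed.

Lemma forward_move H st F B j a p : covers H st F B -> F j = a :: p ->
  edge_count t B (fpos st j, a) < fcount st F (fpos st j, a) -> budget_move H st.
Proof.
move=> [Fpath Bpath HF] Fj lt; set v := fpos st j in lt *.
have /and3P[/andP[vaE Ep] pt /andP[_ Up]] : is_path E v t (a :: p).
  by rewrite -Fj; apply: Fpath.
set st' := tset st (lift ord0 j) a; set F' := [eta F with j |-> p].
have Fcount e : fcount st' F' e + ((v, a) == e) = fcount st F e.
  have same i : i != j -> fpos st' i = fpos st i /\ F' i = F i.
    by move=> ij; rewrite fpos_tset_f /= (negbTE ij).
  have := fcount_replace e same.
  by rewrite Fj edge_count_cons fpos_tset_f /= !eqxx -/v; lia.
have HFva := HF (v, a); have Fva := Fcount (v, a); rewrite eqxx in Fva.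
exists st', (w v a), [:: (v, a)]; split.
- exact: tm_forward.
- by rewrite big_seq1.
- split=> // [e|e]; first by rewrite inE => /eqP->.
  by rewrite /= addn0; case: eqP => [<-|_] /=; lia.
exists F', B; split.
- move=> i; rewrite fpos_tset_f /=; case: (i == j); last exact: Fpath.
  by apply/and3P.
- by rewrite bpos_tset_f.
- move=> e; rewrite /consume /= addn0; have := HF e; have := Fcount e.
  by case: eqP => [<-|_] /=; lia.
Qed.

Lemma backward_move H st F B u :
    covers H st F (rcons B u) ->
    fcount st F (last t B, u) < edge_count t (rcons B u) (last t B, u) ->
  budget_move H st.
Proof.
move=> [Fpath Bpath HF] lt; set v := last t B in lt *.
have /and3P[+ /eqP + _] := Bpath; rewrite rcons_path last_rcons => /andP[_ vuE] stu.
have := Bpath; rewrite -cats1 => /is_path_cat[Bpath' _].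
have Bcount e : edge_count t (rcons B u) e = edge_count t B e + ((v, u) == e).
  by rewrite -cats1 edge_count_cat /edge_count /= addn0.
set st' := tset st ord0 v.
have Fcount e : fcount st' F e = fcount st F e.
  by apply: eq_bigr => i _; rewrite fpos_tset_b.
have HFvu := HF (v, u); rewrite Bcount eqxx in HFvu lt.
exists st', (w v u), [:: (v, u)]; split.
- by have := @tm_backward R V E w k st v; rewrite -stu; apply.
- by rewrite big_seq1.
- split=> // [e|e]; first by rewrite inE => /eqP->.
  by rewrite /= addn0; case: eqP => [<-|_] /=; lia.
exists F, B; split.
- by move=> i; rewrite fpos_tset_b.
- by rewrite bpos_tset_b.
- move=> e; rewrite /consume /= addn0 Fcount; have := HF e; rewrite Bcount.
  by case: eqP => [<-|_] /=; lia.
Qed.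

Lemma covers_reroute H st F B B' j : covers H st F B ->
    is_path E t (bpos st) B' ->
    {subset path_edges t B' <=
      [predU path_edges t B & path_edges (fpos st j) (F j)]} ->
  covers H st F B'.
Proof.
move=> [Fpath Bpath HF] B'path B'sub; split=> // e.
have /and3P[_ _ UB] := Bpath; have /and3P[_ _ UB'] := B'path.
have /and3P[_ _ UF] := Fpath j; have := leq_edge_count_fcount st F j e.
have := HF e; rewrite !edge_count_uniq //.
case e'B: (e \in path_edges t B'); last by lia.
by case/orP: (B'sub e e'B) => ->; lia.
Qed.

Lemma swap_move H st F B j q q' B1 B2 : covers H st F B ->
    F j = q ++ q' -> last (fpos st j) q = bpos st -> q != [::] ->
    B = B1 ++ B2 -> last t B1 = fpos st j ->
    ~~ has (mem (path_edges t B1)) (path_edges (fpos st j) q) ->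
  budget_move H st.
Proof.
move=> [Fpath Bpath HF] FjE qu q0 BE B1v disj.
set v := fpos st j in FjE qu B1v disj *; set u := st ord0 in qu *.
have [qpath q'path] : is_path E v u q /\ is_path E u t q'.
  by rewrite -qu; apply: is_path_cat; rewrite -FjE; apply: Fpath.
have [B1path _] : is_path E t v B1 /\ is_path E v u B2.
  by rewrite -B1v; apply: is_path_cat; rewrite -BE.
have [d dist dq] := exists_shortest_dist w qpath.
set st' := tswap st (lift ord0 j); set F' := [eta F with j |-> q'].
have Fcount e : fcount st' F' e + edge_count v q e = fcount st F e.
  have same i : i != j -> fpos st' i = fpos st i /\ F' i = F i.
    by move=> ij; rewrite fpos_tswap /= (negbTE ij).
  have := fcount_replace e same.
  by rewrite FjE edge_count_cat qu fpos_tswap /= eqxx -/v -/u; lia.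
have Bcount e : edge_count t B e = edge_count t B1 e + edge_count v B2 e.
  by rewrite BE edge_count_cat B1v.
have disj_e e : 0 < edge_count v q e -> edge_count t B1 e = 0.
  rewrite !edge_count_gt0 => eq; apply/eqP; rewrite -leqn0 leqNgt edge_count_gt0.
  by apply: contra disj => eB1; apply/hasP; exists e.
exists st', d, (path_edges v q); split.
- exact: tm_flip.
- exact: dq.
- split=> [|e|e]; first by case: (q) q0.
    by apply: path_edges_subset; case/and3P: qpath.
  by have := HF e; have := Fcount e; rewrite /edge_count; lia.
exists F', B1; split.
- move=> i; rewrite fpos_tswap /=; case: (i == j) => //; exact: Fpath.
- by rewrite bpos_tswap.
- move=> e; have := HF e; have := Fcount e; have := Bcount e; have := disj_e e.
  by rewrite /consume /edge_count; lia.
Qed.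

Lemma flip_move H st F B j a p : covers H st F B -> F j = a :: p ->
  bpos st \in F j -> fpos st j \in t :: B -> budget_move H st.
Proof.
move=> cov Fj uF vB; have [Fpath Bpath _] := cov.
set v := fpos st j in vB *; set u := st ord0 in uF *.
have /and3P[_ _ /= /andP[vNF _]] := Fpath j.
have [q [q' [FjE qu]]] : exists q q', F j = q ++ q' /\ last v q = u.
  by apply: split_at_vertex; rewrite in_cons uF orbT.
have [B1 [B2 [BE B1v]]] := split_at_vertex vB.
have [shared|] := boolP (has (mem (path_edges t B1)) (path_edges v q)); last first.
  apply: (swap_move cov FjE qu _ BE B1v); apply: contraNneq vNF => q0.
  by move: uF; rewrite -qu q0.
have [qpath _] : is_path E v u q /\ is_path E u t q'.
  by rewrite -qu; apply: is_path_cat; rewrite -FjE; apply: Fpath.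
have [B1path _] : is_path E t v B1 /\ is_path E v u B2.
  by rewrite -B1v; apply: is_path_cat; rewrite -BE.
have [r rpath redges] := splice_paths B1path qpath shared.
have cov' : covers H st F r.
  apply: (covers_reroute (j := j) cov rpath) => e /redges /andP[_ /orP[eB1|eq]] /=.
    by rewrite inE BE path_edges_cat mem_cat eB1.
  by rewrite inE FjE path_edges_cat mem_cat eq !orbT.
apply: (forward_move cov' Fj).
have -> : edge_count t r (v, a) = 0.
  apply/eqP; rewrite -leqn0 leqNgt edge_count_gt0.
  by apply/negP => /redges; rewrite eqxx.
exact: (fcount_first_edge_gt0 st Fj).
Qed.

Lemma exists_unfinished_token st F :
    (forall i, is_path E (fpos st i) t (F i)) -> bpos st = t -> st != final ->
  exists i a p, F i = a :: p.
Proof.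
move=> Fpath bt st_final; have [m stm] : exists m, st m != t.
  apply/existsP; apply: contraNT st_final => /existsPn stt.
  by apply/eqP/ffunP => m; rewrite ffunE; apply/eqP/negPn.
case: (unliftP ord0 m) stm => [i ->|->] stm; last by rewrite bt eqxx in stm.
have /and3P[_ /eqP + _] := Fpath i; case Fi: (F i) => [|a p] /= it.
  by rewrite it eqxx in stm.
by exists i, a, p.
Qed.

Lemma exists_budget_move H st : coverable H st -> st != final -> budget_move H st.
Proof.
move=> [F [B cov]] st_final; have [Fpath Bpath _] := cov.
have [[j [a [p [Fj lt]]]]|noF] : (exists j a p, F j = a :: p /\
      edge_count t B (fpos st j, a) < fcount st F (fpos st j, a)) \/
    (forall j a p, F j = a :: p ->
      fcount st F (fpos st j, a) <= edge_count t B (fpos st j, a)).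
- case: (boolP [exists j, if F j is a :: _ then
      edge_count t B (fpos st j, a) < fcount st F (fpos st j, a) else false]).
    by case/existsP=> j; case Fj: (F j) => [//|a p] lt; left; exists j, a, p.
  move/existsPn=> noF; right=> j a p Fj; have := noF j.
  by rewrite Fj /= -leqNgt.
- exact: forward_move cov Fj lt.
case/lastP: B cov Bpath noF => [|B u] cov Bpath noF.
  have /and3P[_ /eqP /= bt _] := Bpath.
  have [i [a [p Fi]]] := exists_unfinished_token Fpath (esym bt) st_final.
  have := noF i a p Fi; rewrite /edge_count /= leqn0 eqn0Ngt.
  by rewrite (fcount_first_edge_gt0 st Fi).
set eb := (last t B, u).
have [lt|] := ltnP (fcount st F eb) (edge_count t (rcons B u) eb).
  exact: backward_move cov lt.
have B_eb : 0 < edge_count t (rcons B u) eb.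
  by rewrite edge_count_gt0 -cats1 path_edges_cat mem_cat mem_head orbT.
move/(leq_trans B_eb); rewrite /fcount lt0n sum_nat_eq0 negb_forall => /existsP[j].
rewrite -lt0n edge_count_gt0; case Fj: (F j) => [//|a p] eb_F.
apply: (flip_move cov Fj).
  have /and3P[_ /eqP <- _] := Bpath; rewrite last_rcons Fj.
  exact: (mem_path_edges eb_F).2.
have := noF j a p Fj => /(leq_trans (fcount_first_edge_gt0 st Fj)).
by rewrite edge_count_gt0 => /mem_path_edges[].
Qed.

Lemma play_within_budget H st : coverable H st ->
  exists2 c, tplay E w st final c & (c <= budget_cost H)%R.
Proof.
have [n] := ubnP (budget_size H); elim: n H st => // n IH H st /ltnSE Hn cov.
have [->|st_final] := eqVneq st final.
  by exists 0%R; [apply: tp_nil | apply: budget_cost_ge0].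
have [st' [c [l [move cl lH cov']]]] := exists_budget_move cov st_final.
have [_ lE lH'] := lH.
have [c' play c'H] := IH _ st' (leq_trans (budget_size_consume lH) Hn) cov'.
exists (c + c')%R; first exact: tp_cons move play.
by rewrite -(budget_cost_consume lE lH') addrC lerD.
Qed.

End TokenGame.

Local Open Scope ring_scope.

Theorem lemma6 (R : realFieldType) (V : finType) (E : {set V * V})
    (w : V -> V -> R) (k : nat) (s t : V) :
  (forall u v, (u, v) \in E -> 0 <= w u v) ->
  forall c, scss_feasible_cost E w k s t c ->
  exists2 c', token_feasible_cost E w k s t c' & c' <= c.
Proof.
move=> w_ge0 c [F [B [Fpath Bpath ->]]].
pose H e := maxn #|[set i | e \in path_edges s (F i)]| (e \in path_edges t B).
have cov : coverable E t H ([ffun=> s] : tstate V k).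
  exists F, B; split=> [i||e]; rewrite ?ffunE //; apply: eq_leq; congr maxn.
    rewrite cardsE -sum1_card [RHS]big_mkcond; apply: eq_bigr => i _ /=.
    by rewrite ffunE edge_count_uniq //; case/and3P: (Fpath i).
  by rewrite edge_count_uniq //; case/and3P: Bpath.
have [c' play c'H] := play_within_budget w_ge0 cov.
suff -> : scss_cost E w s t F B = budget_cost E w H by exists c'.
by apply: eq_bigr => e _; rewrite /H -maxEnat natr_max.
Qed.
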